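(* Let $I_0$ be an interval and let $\{f_k\}_{k\ge0}$ be a $C^1$-uniformly equicontinuous and $C^1$-uniformly bounded sequence of $C^1$ maps $f_k:I_0\to I_0$ with $p=\sup_k\#\mathcal{C}_k<\infty$. Assume that for Lebesgue almost every $x\in I_0$, $$\liminf_{n\to\infty}\frac1n\log|Df^n(x)|\ge\lambda>0.$$ Then, given $\gamma>0$, there exists $\varepsilon>0$ such that for Lebesgue almost every $x\in I_0$, $$\limsup_{n\to\infty}\frac1n\sum_{j=0}^{n-1}\chi_{V_\varepsilon\mathcal{C}_j}(f^j(x))<\gamma.$$
   Context: $\mathcal{C}_k$ is the set of critical points of $f_k$; $f^j=f_{j-1}\circ\cdots\circ f_0$, $f^0=\mathrm{id}$. $V_\varepsilon\mathcal{C}_k$ is the union of the balls $B(c,\varepsilon)$ over $c\in\mathcal{C}_k$; $\chi$ is the indicator function. $C^1$-uniformly equicontinuous: for every $\zeta>0$ there is $\varepsilon>0$ such that $|x-y|<\varepsilon$ implies $|f_k(x)-f_k(y)|<\zeta$ and $|Df_k(x)-Df_k(y)|<\zeta$ for all $k$. $C^1$-uniformly bounded: there is $\Gamma>0$ with $|f_k(x)|,|Df_k(x)|\le\Gamma$ for all $x,k$. *)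

From HB Require Import structures.
From mathcomp Require Import all_boot all_order all_algebra.
From mathcomp Require Import all_classical all_reals all_analysis.
Set Implicit Arguments. Unset Strict Implicit. Unset Printing Implicit Defensive.
Import Order.TTheory GRing.Theory Num.Theory.
Import numFieldNormedType.Exports.
Local Open Scope classical_set_scope.
Local Open Scope ring_scope.

Fixpoint fiter (R : realType) (f : nat -> R -> R) (j : nat) (x : R) : R :=
  match j with
  | 0%N => x
  | j'.+1 => f j' (fiter f j' x)
  end.

(* Derivative of f^n at x via the chain rule: Df^n(x) = prod_{j<n} Df_j(f^j x). *)
Definition Dfiter (R : realType) (f Df : nat -> R -> R) (n : nat) (x : R) : R :=
  \prod_(j < n) Df j (fiter f j x).

Definition crit (R : realType) (I0 : interval R) (Df : nat -> R -> R) (k : nat)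
  : set R := [set c | c \in I0 /\ Df k c = 0].

Definition Vnbhd (R : realType) (eps : R) (C : set R) : set R :=
  \bigcup_(c in C) ball c eps.

Definition C1_on (R : realType) (I0 : interval R) (g Dg : R -> R) : Prop :=
  {within [set` I0], continuous g} /\
  {within [set` I0], continuous Dg} /\
  (forall x, interior [set` I0] x -> is_derive x 1 g (Dg x)).

From HB Require Import structures.
From mathcomp Require Import all_boot all_order all_algebra.
From mathcomp Require Import all_classical all_reals all_analysis.
From mathcomp Require Import lra.
Import Order.TTheory GRing.Theory Num.Theory.
Import numFieldNormedType.Exports.
Local Open Scope classical_set_scope.
Local Open Scope ring_scope.

(* Bound |Df_j| <= G everywhere, and |Df_j| < zeta within eps of a critical
   point of f_j (equicontinuity of the Df_j, since Df_j vanishes there).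
   Hence ln |Df^n(x)| <= n ln G - (ln G - ln zeta) S_n(x), where S_n(x) counts
   the visits of the orbit to V_eps C_j before time n.  Positivity of the
   Lyapunov exponent makes ln |Df^n(x)| > 0 for large n, so
   S_n(x)/n < ln G / (ln G - ln zeta), which is below gamma once zeta is
   small enough. *)

Lemma ln_norm_prod_le (R : realType) n (a b : nat -> R) :
  (forall j, (j < n)%N -> a j != 0 -> ln `|a j| <= b j) ->
  \prod_(j < n) a j != 0 -> ln `|\prod_(j < n) a j| <= \sum_(j < n) b j.
Proof.
elim: n => [|n IH] hab; first by rewrite !big_ord0 normr1 ln1.
rewrite !big_ord_recr /= mulf_eq0 negb_or => /andP[prod_neq0 an_neq0].
rewrite normrM lnM ?posrE ?normr_gt0 //.
apply: lerD; last exact: hab.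
by apply: IH => // j jn; apply: hab; rewrite ltnS ltnW.
Qed.

Lemma fiter_mem {R : realType} {I0 : interval R} {f : nat -> R -> R} j x :
  (forall k x, x \in I0 -> f k x \in I0) -> x \in I0 -> fiter f j x \in I0.
Proof. by move=> f_maps xI; elim: j => //= j IH; apply: f_maps. Qed.

Local Open Scope ereal_scope.

Lemma limn_einf_gt0_ev (R : realType) (u : (\bar R)^nat) :
  0 < limn_einf u -> exists N, forall n, (N <= n)%N -> 0 < u n.
Proof.
rewrite limn_einf_lim (cvg_lim _ (@cvg_einfs_sup _ u)) //.
move=> /ereal_sup_gt[_ [N _ <-] infN_gt0].
exists N => n Nn; apply: (lt_le_trans infN_gt0).
by apply: ereal_inf_lbound; exists n.
Qed.

Lemma limn_esup_le_ev (R : realType) (u : (\bar R)^nat) (b : \bar R) N :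
  (forall n, (N <= n)%N -> u n <= b) -> limn_esup u <= b.
Proof.
move=> ub; rewrite limn_esup_lim; apply: lime_le; first exact: is_cvg_esups.
exists N => // m /= Nm; apply: ge_ereal_sup => _ [k /= mk <-].
exact/ub/(leq_trans Nm mk).
Qed.

Local Close Scope ereal_scope.

Section CriticalVisits.
Context {R : realType} {I0 : interval R} {f Df : nat -> R -> R}.
Context {G zeta eps : R}.
Hypothesis f_maps : forall k x, x \in I0 -> f k x \in I0.
Hypothesis Df_equicont : forall k x y, x \in I0 -> y \in I0 ->
  `|x - y| < eps -> `|Df k x - Df k y| < zeta.
Hypothesis Df_bounded : forall k x, x \in I0 -> `|Df k x| <= G.
Hypotheses (zeta_gt0 : 0 < zeta) (zeta_lt1 : zeta < 1) (G_ge1 : 1 <= G).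

Definition crit_visit j x : R := \1_(Vnbhd eps (crit I0 Df j)) (fiter f j x).

Definition crit_visits n x : R := \sum_(j < n) crit_visit j x.

Let ln_gap := ln G - ln zeta.

Let ln_gap_gt0 : 0 < ln_gap.
Proof.
have := @ln_ge0 _ G G_ge1; have : ln zeta < 0 by apply: ln_lt0; rewrite zeta_gt0.
rewrite /ln_gap; lra.
Qed.

Lemma ln_norm_Df_le j x : x \in I0 -> Df j (fiter f j x) != 0 ->
  ln `|Df j (fiter f j x)| <= ln G - ln_gap * crit_visit j x.
Proof.
move=> xI Df_neq0; have yI := fiter_mem j x f_maps xI.
rewrite /crit_visit indicE.
case: (boolP (fiter f j x \in _)) => [|_]; last first.
  rewrite mulr0 subr0 ler_ln ?posrE ?normr_gt0 ?Df_bounded //.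
  by rewrite (lt_le_trans ltr01).
rewrite inE => -[c [cI Dc0] near_c].
rewrite mulr1 /ln_gap opprB addrCA subrr addr0 ler_ln ?posrE ?normr_gt0 //.
have := Df_equicont j _ _ yI cI; rewrite Dc0 subr0 => Df_small.
apply/ltW/Df_small; move: near_c; rewrite -ball_normE /ball_ /=.
by rewrite distrC.
Qed.

Lemma ln_norm_Dfiter_le n x : x \in I0 -> Dfiter f Df n x != 0 ->
  ln `|Dfiter f Df n x| <= n%:R * ln G - ln_gap * crit_visits n x.
Proof.
move=> xI Dfn_neq0.
apply: (le_trans (@ln_norm_prod_le _ _ (fun j => Df j (fiter f j x))
  (fun j => ln G - ln_gap * crit_visit j x) _ Dfn_neq0)).
  by move=> j _; exact: ln_norm_Df_le.
by rewrite big_split /= sumr_const card_ord sumrN -mulr_sumr mulr_natl.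
Qed.

Lemma crit_frequency_le x : x \in I0 ->
  (0 < limn_einf (fun n => (ln `|Dfiter f Df n x| / n%:R)%:E))%E ->
  (limn_esup (fun n => (crit_visits n x / n%:R)%:E)
   <= (ln G / ln_gap)%:E)%E.
Proof.
move=> xI /limn_einf_gt0_ev[N exponent_gt0].
apply: (@limn_esup_le_ev _ _ _ N.+1) => n Nn.
have n_gt0 : 0 < n%:R :> R by rewrite ltr0n (leq_trans _ Nn).
have := exponent_gt0 n (ltnW Nn); rewrite lte_fin pmulr_lgt0 ?invr_gt0 //.
move=> ln_gt0.
have Dfn_neq0 : Dfiter f Df n x != 0.
  by apply: contraTneq ln_gt0 => ->; rewrite normr0 ln0 // ltxx.
have := ln_norm_Dfiter_le n x xI Dfn_neq0.
rewrite lee_fin ler_pdivrMr // mulrAC ler_pdivlMr // mulrC (mulrC (ln G)).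
lra.
Qed.

End CriticalVisits.

Lemma small_threshold {R : realType} {L gamma : R} : 0 <= L -> 0 < gamma ->
  exists zeta, [/\ 0 < zeta, zeta < 1 & L / (L - ln zeta) < gamma].
Proof.
move=> L_ge0 gamma_gt0; have Lg_ge0 := divr_ge0 L_ge0 (ltW gamma_gt0).
exists (expR (- (L / gamma + 1))); split; first exact: expR_gt0.
  by rewrite expR_lt1 oppr_lt0; lra.
rewrite expRK opprK ltr_pdivrMr; last by lra.
rewrite mulrDr mulrDr mulrCA divff ?gt_eqF // mulr1.
by have := mulr_ge0 (ltW gamma_gt0) L_ge0; lra.
Qed.

Theorem corollary4p4 (R : realType) (I0 : interval R) (f Df : nat -> R -> R)
  (lambda : R) :
  (forall k x, x \in I0 -> f k x \in I0) ->
  (forall k, C1_on I0 (f k) (Df k)) ->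
  (* C^1-uniformly equicontinuous *)
  (forall zeta : R, 0 < zeta -> exists2 eps : R, 0 < eps &
     forall k x y, x \in I0 -> y \in I0 -> `|x - y| < eps ->
       `|f k x - f k y| < zeta /\ `|Df k x - Df k y| < zeta) ->
  (* C^1-uniformly bounded *)
  (exists Gamma : R, forall k x, x \in I0 ->
       `|f k x| <= Gamma /\ `|Df k x| <= Gamma) ->
  (* p = sup_k #C_k < oo *)
  (exists p : nat, forall k, (crit I0 Df k #<= `I_p)%card) ->
  0 < lambda ->
  {ae (@lebesgue_measure R), forall x, x \in I0 ->
     (lambda%:E <= limn_einf (fun n => (ln `|Dfiter f Df n x| / n%:R)%:E))%E} ->
  forall gamma : R, 0 < gamma ->
  exists2 eps : R, 0 < eps &
  {ae (@lebesgue_measure R), forall x, x \in I0 ->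
     (limn_esup (fun n => ((\sum_(j < n)
          \1_(Vnbhd eps (crit I0 Df j)) (fiter f j x)) / n%:R)%:E)
      < gamma%:E)%E}.
Proof.
move=> f_maps _ equicont [Gamma bounded] _ lambda_gt0 exponent_ge gamma gamma_gt0.
pose G := Num.max Gamma 1.
have G_ge1 : 1 <= G by rewrite le_max lexx orbT.
have Df_bounded k x : x \in I0 -> `|Df k x| <= G.
  by move=> xI; rewrite le_max (bounded k x xI).2.
have [zeta [zeta_gt0 zeta_lt1 ratio_lt]] :=
  small_threshold (ln_ge0 G_ge1) gamma_gt0.
have [eps eps_gt0 near_eps] := equicont zeta zeta_gt0.
exists eps => //.
apply: filterS exponent_ge; first exact: (ae_filter_ringOfSetsType lebesgue_measure).
move=> x exponent_x xI; rewrite -lte_fin in ratio_lt.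
apply: le_lt_trans ratio_lt.
have Df_near k y z : y \in I0 -> z \in I0 -> `|y - z| < eps ->
    `|Df k y - Df k z| < zeta.
  by move=> yI zI yz; exact: (near_eps k y z yI zI yz).2.
have exponent_gt0 : (0 < limn_einf (fun n =>
    (ln `|Dfiter f Df n x| / n%:R)%:E))%E.
  by apply: lt_le_trans (exponent_x xI); rewrite lte_fin.
exact: (crit_frequency_le f_maps Df_near Df_bounded zeta_gt0 zeta_lt1 G_ge1 x xI
  exponent_gt0).
Qed.
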